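(* Let $A$ be a setoid, $B$ a setoid family over $A$ and $(C,a_C)$ a $P_B$-algebra. For every $w:W$ there are an extensional function $\mathsf{recImS}\,w:\mathsf{ImS}\,w\Rightarrow C$ and a term $\mathsf{recImSpf}\,w:\mathsf{RecDef}\,w\,(\mathsf{recImS}\,w)$.
   Context: Setting: intensional Martin-Löf type theory with $\Pi$-types, record types and a universe $\mathsf U$ closed under $\Pi$ and containing intensional $\Sigma$-types, identity types, unit type, W-types and dependent W-types; propositions-as-types. For a W-type with constructor $\mathsf{sup}$, $\mathsf n,\mathsf b$ are node and branch functions. $\mathsf{DW}_{I,X,Y,d}:I\to\mathsf U$ denotes the dependent W-type: the inductive family with constructor $\mathsf{dsup}\,i\,x\,f:\mathsf{DW}\,i$ for $x:X\,i$ and $f:\prod_{y:Y\,i\,x}\mathsf{DW}(d\,i\,x\,y)$, and the usual dependent eliminator. A setoid $X$: type $X_0:\mathsf U$ with relation $\approx_X$ and proofs of reflexivity, symmetry, transitivity; $x:X$ means $x:X_0$. Extensional function $f:X\Rightarrow Y$: $f_0:X_0\to Y_0$ with a proof that it preserves $\approx$; $X\Rightarrow Y$ is a setoid with pointwise equality; $\circ$ is composition. A setoid family $B$ over setoid $A$: setoids $B\,a$ and transports $B_\alpha:B\,a\Rightarrow B\,a'$ for $\alpha:a\approx_Aa'$, functorial up to $\approx$, with $B_\alpha\approx B_{\alpha'}$ for all $\alpha,\alpha'$. Write $b\approx_\alpha b'$ for $B_\alpha b\approx b'$. $P_BX$: setoid with underlying type $\sum_{a:A}(B\,a\Rightarrow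 X)$ and $(a,k)\approx(a',k'):=\sum_{\alpha:a\approx a'}k\approx k'\circ B_\alpha$. A $P_B$-algebra is a setoid $C$ with extensional $a_C:P_BC\Rightarrow C$. $W$: with $A_0,B_0$ underlying types and $\mathsf W:=\mathsf W(A_0,B_0)$, $\approx^Bw\,w':=\mathsf{DW}_{I,X,Y,d}(w,w')$ with $I:=\mathsf W\times\mathsf W$, $X(w,w'):=\mathsf nw\approx_A\mathsf nw'$, $Y(w,w')\alpha:=\sum_{b,b'}b\approx_\alpha b'$, $d(w,w')\alpha(b,b',\beta):=(\mathsf bwb,\mathsf bw'b')$. $W$: underlying type $\sum_{w:\mathsf W}\approx^Bw\,w$, $(w,\_)\approx_W(w',\_):=\approx^Bw\,w'$. $\mathsf n$, $\mathsf b$ induce extensional $\mathsf n:W\Rightarrow A$ and $\mathsf b\,w:B(\mathsf nw)\Rightarrow W$; for $\gamma:w\approx_Ww'$, $\mathsf n^\ast\gamma:\mathsf nw\approx_A\mathsf nw'$ denotes extensionality of $\mathsf n$ applied to $\gamma$. $\mathsf{ImS}\,w$ (for $w:W$): setoid with underlying type $B_0(\mathsf nw)$ and $b\approx b':=\mathsf bwb\approx_W\mathsf bwb'$; transport $\mathsf{ImS}_\gamma s:=B_{\mathsf n^\ast\gamma}s$. $e_w:B(\mathsf nw)\Rightarrow\mathsf{ImS}\,w$ has identity underlying function. A family $F:\prod_{s:\mathsf{ImS}w}\mathsf{ImS}(\mathsf bws)\Rightarrow C$ is coherent if $F\,s\approx(F\,s')\circ\mathsf{ImS}_\sigma$ for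 all $\sigma:s\approx s'$ in $\mathsf{ImS}\,w$; $\mathsf{CohMaps}\,w$ is the setoid of coherent families with pointwise equality. For $F:\mathsf{CohMaps}\,w$, $\mathsf{recst}\,w\,F:\mathsf{ImS}\,w\Rightarrow C$ is the extensional function $s\mapsto a_C(\mathsf n(\mathsf bws),(F\,s)\circ e_{\mathsf bws})$. For $k:\mathsf{ImS}\,w\Rightarrow C$, $\mathsf{RecDef}\,w\,k:=\mathsf{DW}_{I',X',Y',d'}(w,k)$ with $I':=\sum_{w:W}(\mathsf{ImS}w\Rightarrow C)$, $X'(w,k):=\sum_{F:\mathsf{CohMaps}w}k\approx\mathsf{recst}\,w\,F$, $Y'(w,k)(F,\_):=$ underlying type of $\mathsf{ImS}\,w$, $d'(w,k)(F,\_)s:=(\mathsf bws,F\,s)$. *)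

(* plain intensional type theory; propositions-as-types.
   The universe U of the paper is modelled by Rocq's Type. *)



Record Setoid := mkSetoid {
  car :> Type;
  eqv : car -> car -> Type;
  srefl : forall x, eqv x x;
  ssym : forall x y, eqv x y -> eqv y x;
  strans : forall x y z, eqv x y -> eqv y z -> eqv x z }.
Arguments eqv {s} x y.
Arguments srefl {s} x.
Arguments ssym {s x y} _.
Arguments strans {s x y z} _ _.

Record ExtFun (X Y : Setoid) := mkExtFun {
  ap :> X -> Y;
  ext : forall x x', eqv x x' -> eqv (ap x) (ap x') }.
Arguments ext {X Y} _ {x x'} _.
Arguments mkExtFun {X Y} ap ext.

Definition FunEqv {X Y : Setoid} (f g : ExtFun X Y) : Type :=
  forall x, eqv (f x) (g x).

Definition FunSetoid (X Y : Setoid) : Setoid.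
Proof.
  refine (@mkSetoid (ExtFun X Y) (@FunEqv X Y) _ _ _).
  - intros f x; apply srefl.
  - intros f g H x; apply ssym, H.
  - intros f g h H1 H2 x; exact (strans (H1 x) (H2 x)).
Defined.

Definition comp {X Y Z : Setoid} (g : ExtFun Y Z) (f : ExtFun X Y) : ExtFun X Z :=
  mkExtFun (fun x => g (f x)) (fun x x' e => ext g (ext f e)).

Record SetoidFamily (A : Setoid) := mkSetoidFamily {
  fam : A -> Setoid;
  tr : forall a a' : A, eqv a a' -> ExtFun (fam a) (fam a');
  tr_refl : forall (a : A) (b : fam a), eqv (tr a a (srefl a) b) b;
  tr_trans : forall (a a' a'' : A) (al : eqv a a') (be : eqv a' a'') (b : fam a),
      eqv (tr a a'' (strans al be) b) (tr a' a'' be (tr a a' al b));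
  tr_irr : forall (a a' : A) (al al' : eqv a a') (b : fam a),
      eqv (tr a a' al b) (tr a a' al' b) }.
Arguments fam {A} _ _.
Arguments tr {A} _ {a a'} _.

Definition treqv {A : Setoid} (B : SetoidFamily A) {a a' : A} (al : eqv a a')
  (b : fam B a) (b' : fam B a') : Type := eqv (tr B al b) b'.

Lemma tr_inv {A : Setoid} (B : SetoidFamily A) {a a' : A} (al : eqv a a') (b' : fam B a') :
  eqv (tr B al (tr B (ssym al) b')) b'.
Proof.
  eapply strans; [apply ssym, tr_trans|].
  eapply strans; [apply tr_irr with (al' := srefl a')|].
  apply tr_refl.
Qed.

Definition PB {A : Setoid} (B : SetoidFamily A) (X : Setoid) : Setoid.
Proof.
  refine (@mkSetoid {a : A & ExtFun (fam B a) X}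
            (fun p q => {al : eqv (projT1 p) (projT1 q) &
                           FunEqv (projT2 p) (comp (projT2 q) (tr B al))}) _ _ _).
  - intros [a k]; exists (srefl a); intro b; simpl.
    apply (ext k), ssym, tr_refl.
  - intros [a k] [a' k'] [al H]; simpl in *.
    exists (ssym al); intro b'; simpl.
    eapply strans; [| apply ssym, H]; simpl.
    apply (ext k'), ssym, tr_inv.
  - intros [a k] [a' k'] [a'' k''] [al H1] [be H2]; simpl in *.
    exists (strans al be); intro b; simpl.
    eapply strans; [apply H1|]; simpl.
    eapply strans; [apply H2|]; simpl.
    apply (ext k''), ssym, tr_trans.
Defined.

(** A P_B-algebra is a setoid C with a_C : P_B C => C; we keep it as two binders. *)

Inductive Wty (A0 : Type) (B0 : A0 -> Type) : Type :=
  sup : forall a : A0, (B0 a -> Wty A0 B0) -> Wty A0 B0.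
Arguments sup {A0 B0} a f.

Definition wnode {A0 B0} (w : @Wty A0 B0) : A0 := match w with sup a _ => a end.
Definition wbranch {A0 B0} (w : @Wty A0 B0) : B0 (wnode w) -> Wty A0 B0 :=
  match w with sup _ f => f end.

Inductive DW (I : Type) (X : I -> Type) (Y : forall i, X i -> Type)
    (d : forall i (x : X i), Y i x -> I) : I -> Type :=
  dsup : forall (i : I) (x : X i), (forall y : Y i x, DW I X Y d (d i x y)) -> DW I X Y d i.
Arguments dsup {I X Y d} i x f.

Definition dnode {I X Y d} {i : I} (p : @DW I X Y d i) : X i :=
  match p with dsup _ x _ => x end.
Definition dbranch {I X Y d} {i : I} (p : @DW I X Y d i) :
  forall y : Y i (dnode p), DW I X Y d (d i (dnode p) y) :=
  match p with dsup _ _ f => f end.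

Section WSetoid.
Context {A : Setoid} (B : SetoidFamily A).

Definition W0 : Type := @Wty (car A) (fun a => car (fam B a)).

Definition IB : Type := (W0 * W0)%type.
Definition XB (i : IB) : Type := eqv (wnode (fst i)) (wnode (snd i)).
Definition YB (i : IB) (al : XB i) : Type :=
  {b : fam B (wnode (fst i)) & {b' : fam B (wnode (snd i)) & treqv B al b b'}}.
Definition dB (i : IB) (al : XB i) (y : YB i al) : IB :=
  (wbranch (fst i) (projT1 y), wbranch (snd i) (projT1 (projT2 y))).

Definition approxB (w w' : W0) : Type := @DW IB XB YB dB (w, w').

Lemma approxB_sym : forall w w', approxB w w' -> approxB w' w.
Proof.
  assert (H : forall i, @DW IB XB YB dB i -> approxB (snd i) (fst i)).
  { intros i p; induction p as [[w w'] al f IH].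
    apply (dsup (w', w) (ssym al : XB (w', w))).
    intros [b' [b be]]; simpl in *.
    assert (P : treqv B al b b').
    { unfold treqv in *.
      eapply strans; [| apply tr_inv with (al := al)].
      apply (ext (tr B al)); exact (ssym be). }
    exact (IH (existT _ b (existT _ b' P))). }
  intros w w' p; exact (H (w, w') p).
Qed.

Lemma approxB_trans : forall w w' w'', approxB w w' -> approxB w' w'' -> approxB w w''.
Proof.
  assert (H : forall i, @DW IB XB YB dB i ->
            forall w'', approxB (snd i) w'' -> approxB (fst i) w'').
  { intros i p; induction p as [[w w'] al f IH]; simpl.
    intros w'' q.
    apply (dsup (w, w'') (strans al (dnode q) : XB (w, w''))).
    intros [b [b'' ga]]; simpl in *.
    apply (IH (existT _ b (existT _ (tr B al b) (srefl _)))).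
    simpl.
    assert (P : treqv B (dnode q) (tr B al b) b'').
    { unfold treqv in *.
      eapply strans; [apply ssym, tr_trans|]. exact ga. }
    exact (dbranch q (existT _ (tr B al b) (existT _ b'' P))). }
  intros w w' w'' p; exact (H (w, w') p w'').
Qed.

Definition WS : Setoid.
Proof.
  refine (@mkSetoid {w : W0 & approxB w w}
            (fun p q => approxB (projT1 p) (projT1 q)) _ _ _).
  - intros [w r]; exact r.
  - intros p q; apply approxB_sym.
  - intros p q r; apply approxB_trans.
Defined.

Definition nW0 (w : WS) : A := wnode (projT1 w).
Definition nstar {w w' : WS} (ga : eqv w w') : eqv (nW0 w) (nW0 w') := dnode ga.
Definition nW : ExtFun WS A := mkExtFun nW0 (fun w w' ga => nstar ga).

Lemma bW_refl (w : WS) (b b' : fam B (nW0 w)) (e : eqv b b') :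
  approxB (wbranch (projT1 w) b) (wbranch (projT1 w) b').
Proof.
  destruct w as [w r]; simpl in *.
  assert (P : treqv B (dnode r) b b').
  { unfold treqv.
    eapply strans; [apply tr_irr with (al' := srefl _)|].
    eapply strans; [apply tr_refl|]. exact e. }
  exact (dbranch r (existT _ b (existT _ b' P))).
Qed.

Definition bW0 (w : WS) (b : fam B (nW0 w)) : WS :=
  existT (fun v : W0 => approxB v v) (wbranch (projT1 w) b) (bW_refl w b b (srefl b)).

Definition bW (w : WS) : ExtFun (fam B (nW0 w)) WS :=
  mkExtFun (bW0 w) (fun b b' e => bW_refl w b b' e).

Definition ImS (w : WS) : Setoid.
Proof.
  refine (@mkSetoid (fam B (nW0 w)) (fun b b' => eqv (bW w b) (bW w b')) _ _ _).
  - intro x; apply srefl.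
  - intros x y; apply ssym.
  - intros x y z; apply strans.
Defined.

Lemma ImS_tr_ext {w w' : WS} (ga : eqv w w') (s s' : ImS w) :
  eqv s s' -> eqv (s := ImS w') (tr B (nstar ga) s) (tr B (nstar ga) s').
Proof.
  intro e.
  assert (Hs : forall t : fam B (nW0 w),
             eqv (s := WS) (bW w t) (bW w' (tr B (nstar ga) t))).
  { intro t. destruct w as [w0 r], w' as [w0' r']; simpl in *.
    exact (dbranch ga (existT _ t (existT _ (tr B (dnode ga) t) (srefl _)))). }
  exact (strans (ssym (Hs s)) (strans (e : eqv (s := WS) (bW w s) (bW w s')) (Hs s'))).
Qed.

Definition ImS_tr {w w' : WS} (ga : eqv w w') : ExtFun (ImS w) (ImS w') :=
  mkExtFun (fun s : ImS w => (tr B (nstar ga) s : ImS w')) (ImS_tr_ext ga).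

Definition e_ (w : WS) : ExtFun (fam B (nW0 w)) (ImS w) :=
  mkExtFun (fun b : fam B (nW0 w) => (b : ImS w))
    (fun (b b' : fam B (nW0 w)) (e : eqv b b') => ext (bW w) e).

Section Rec.
Context (C : Setoid) (aC : ExtFun (PB B C) C).

Definition Coherent (w : WS) (F : forall s : ImS w, ExtFun (ImS (bW w s)) C) : Type :=
  forall (s s' : ImS w) (sg : eqv s s'), FunEqv (F s) (comp (F s') (ImS_tr sg)).

Definition CohMaps (w : WS) : Setoid.
Proof.
  refine (@mkSetoid {F : forall s : ImS w, ExtFun (ImS (bW w s)) C & Coherent w F}
            (fun F G => forall s, FunEqv (projT1 F s) (projT1 G s)) _ _ _).
  - intros F s x; apply srefl.
  - intros F G H s x; apply ssym, H.
  - intros F G K H1 H2 s x; exact (strans (H1 s x) (H2 s x)).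
Defined.

Definition recst0 (w : WS) (F : CohMaps w) (s : ImS w) : C :=
  aC (existT _ (nW0 (bW w s)) (comp (projT1 F s) (e_ (bW w s))) : PB B C).

Lemma recst_ext (w : WS) (F : CohMaps w) (s s' : ImS w) :
  eqv s s' -> eqv (recst0 w F s) (recst0 w F s').
Proof.
  intro sg. unfold recst0. apply (ext aC).
  exists (nstar sg). intro b. simpl.
  exact (projT2 F s s' sg b).
Qed.

Definition recst (w : WS) (F : CohMaps w) : ExtFun (ImS w) C :=
  mkExtFun (recst0 w F) (recst_ext w F).

Definition I' : Type := {w : WS & ExtFun (ImS w) C}.
Definition X' (i : I') : Type :=
  {F : CohMaps (projT1 i) & FunEqv (projT2 i) (recst (projT1 i) F)}.
Definition Y' (i : I') (x : X' i) : Type := car (ImS (projT1 i)).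
Definition d' (i : I') (x : X' i) (s : Y' i x) : I' :=
  existT _ (bW (projT1 i) s) (projT1 (projT1 x) s).

Definition RecDef (w : WS) (k : ExtFun (ImS w) C) : Type :=
  @DW I' X' Y' d' (existT _ w k).

End Rec.
End WSetoid.


(** A term of [RecDef w k] certifies that [k s] is [a_C] applied to the
    branch [b w s] and to a family [F] of maps on the subtrees which are
    themselves certified. By induction on certificates, certified maps over
    bisimilar trees agree up to transport along the bisimilarity. Hence the
    maps obtained by recursion on the branches of [w] form a coherent family,
    [recst] applies to it, and recursion on the underlying W-tree builds
    [recImS w] together with its certificate. *)

Section RecImS.
Context {A : Setoid} (B : SetoidFamily A) (C : Setoid) (aC : ExtFun (PB B C) C).

Lemma bW_tr (w w' : WS B) (ga : eqv w w') (t : fam B (nW0 B w)) :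
  eqv (bW B w t) (bW B w' (tr B (nstar B ga) t)).
Proof.
  destruct w as [w0 r], w' as [w0' r']; simpl in *.
  exact (dbranch ga (existT _ t (existT _ (tr B (dnode ga) t) (srefl _)))).
Qed.

Lemma RecDef_tr (w w' : WS B) (ga : eqv w w')
    (k : ExtFun (ImS B w) C) (k' : ExtFun (ImS B w') C) :
  RecDef B C aC w k -> RecDef B C aC w' k' -> FunEqv k (comp k' (ImS_tr B ga)).
Proof.
  pose (RD := @DW (I' B C) (X' B C aC) (Y' B C aC) (d' B C aC)).
  enough (H : forall i (p : RD i) i' (p' : RD i') (ga : eqv (projT1 i) (projT1 i')),
      FunEqv (projT2 i) (comp (projT2 i') (ImS_tr B ga))).
  { intros p p'; exact (H _ p _ p' ga). }
  intros i p; induction p as [[v k0] [F HF] f IH]; simpl in *.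
  intros i' [[v' k0'] [F' HF'] f'] ga' t; simpl in *.
  eapply strans; [apply HF|].
  eapply strans; [|apply ssym, HF'].
  apply (ext aC); exists (nstar B (bW_tr v v' ga' t)); intro b.
  exact (IH t _ (f' (tr B (nstar B ga') t)) (bW_tr v v' ga' t) b).
Qed.

Definition RecDef_sup (w : WS B)
    (G : forall s : ImS B w, {k : ExtFun (ImS B (bW B w s)) C & RecDef B C aC (bW B w s) k}) :
  {k : ExtFun (ImS B w) C & RecDef B C aC w k}.
Proof.
  pose (F := existT (Coherent B C w) (fun s => projT1 (G s))
               (fun s s' sg => RecDef_tr _ _ sg _ _ (projT2 (G s)) (projT2 (G s')))
             : CohMaps B C w).
  exists (recst B C aC w F).
  apply (dsup (existT _ w (recst B C aC w F)) (existT _ F (fun s => srefl _))).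
  intro s; exact (projT2 (G s)).
Defined.

End RecImS.

Theorem proposition3p13 (A : Setoid) (B : SetoidFamily A) (C : Setoid)
  (aC : ExtFun (PB B C) C) (w : WS B) :
  { recImS : ExtFun (ImS B w) C & RecDef B C aC w recImS }.
Proof.
  destruct w as [w0 r]; revert r.
  induction w0 as [a f IH]; intro r.
  exact (RecDef_sup B C aC (existT (fun v : W0 B => approxB B v v) (sup a f) r) (fun s => IH s _)).
Qed.
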